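(* Let $\mathcal{M}=\langle M,\circ,e\rangle$ be an mge monoid. Then for every $n\ge1$, every equalizable tuple $\langle m_1,\dots,m_n\rangle\in M^n$ has an mge.
   Context: In a monoid $\langle M,\circ,e\rangle$, a tuple $\langle m_1,\dots,m_n\rangle\in M^n$ is equalizable if there is $\langle x_1,\dots,x_n\rangle\in M^n$ (an equalizer) with $m_1x_1=\dots=m_nx_n$; an equalizer is a most general equalizer (mge) if every equalizer has the form $\langle x_1x,\dots,x_nx\rangle$ for some $x\in M$. An mge monoid is a monoid with right cancellation ($ac=bc\Rightarrow a=b$) in which every equalizable pair has an mge. *)

From mathcomp Require Import all_boot.
Set Implicit Arguments. Unset Strict Implicit. Unset Printing Implicit Defensive.

Definition is_monoid (M : Type) (op : M -> M -> M) (e : M) : Prop :=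
  (forall a b c, op a (op b c) = op (op a b) c) /\
  (forall a, op e a = a) /\ (forall a, op a e = a).

Definition right_cancellative (M : Type) (op : M -> M -> M) : Prop :=
  forall a b c, op a c = op b c -> a = b.

Definition equalizer (M : Type) (op : M -> M -> M) (n : nat)
  (m x : 'I_n -> M) : Prop :=
  forall i j : 'I_n, op (m i) (x i) = op (m j) (x j).

Definition equalizable (M : Type) (op : M -> M -> M) (n : nat)
  (m : 'I_n -> M) : Prop :=
  exists x : 'I_n -> M, equalizer op m x.

Definition mge (M : Type) (op : M -> M -> M) (n : nat)
  (m x : 'I_n -> M) : Prop :=
  equalizer op m x /\
  forall y : 'I_n -> M, equalizer op m y ->
    exists z : M, forall i : 'I_n, y i = op (x i) z.

Definition mge_monoid (M : Type) (op : M -> M -> M) (e : M) : Prop :=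
  is_monoid op e /\ right_cancellative op /\
  forall m : 'I_2 -> M, equalizable op m -> exists x, mge op m x.

From mathcomp Require Import all_boot.

Set Implicit Arguments.
Unset Strict Implicit.
Unset Printing Implicit Defensive.

(* If x is an mge of the first n
   entries, with common value c = m_1 x_1, then an mge <u, v> of the pair
   <c, m_(n+1)> yields the mge <x_1 u, ..., x_n u, v> of the whole tuple:
   an equalizer y factors as y_i = x_i z on the first n entries, so <z, y_(n+1)>
   equalizes <c, m_(n+1)> and hence factors through <u, v>. *)

Section MgeTuples.

Variables (M : Type) (op : M -> M -> M) (e : M).
Hypothesis opA : associative op.
Hypothesis op1 : left_id e op.
Hypothesis pair_mge :
  forall m : 'I_2 -> M, equalizable op m -> exists x, mge op m x.

Lemma equalizer_common_value n (m x : 'I_n -> M) c :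
  (forall i, op (m i) (x i) = c) -> equalizer op m x.
Proof. by move=> mx_c i j; rewrite !mx_c. Qed.

Lemma equalizer_pairP (m x : 'I_2 -> M) :
  equalizer op m x <-> op (m ord0) (x ord0) = op (m ord_max) (x ord_max).
Proof.
split=> [|mx_eq]; first exact.
apply: (equalizer_common_value (c := op (m ord0) (x ord0))).
case=> [[|[|//]] lt_i2]; last rewrite mx_eq.
all: by congr (op (m _) (x _)); apply: val_inj.
Qed.

Lemma mge_singleton (m : 'I_1 -> M) : mge op m (fun _ => e).
Proof.
split=> [i j|y _]; first by rewrite !ord1.
by exists (y ord0) => i; rewrite ord1 op1.
Qed.

Lemma equalizer_lift_max n (m x : 'I_n.+1 -> M) :
  equalizer op m x -> equalizer op (m \o lift ord_max) (x \o lift ord_max).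
Proof. by move=> mx i j; apply: mx. Qed.

Lemma mge_extend n (m : 'I_n.+2 -> M) (x : 'I_n.+1 -> M) :
  mge op (m \o lift ord_max) x -> equalizable op m -> exists x', mge op m x'.
Proof.
move=> [x_eq x_gen] [y0 y0_eq].
pose c := op (m (lift ord_max ord0)) (x ord0).
have mx_c j : op (m (lift ord_max j)) (x j) = c by apply: x_eq.
pose p (i : 'I_2) := if val i == 0 then c else m ord_max.
have p_eq y z : equalizer op m y -> (forall j, y (lift ord_max j) = op (x j) z) ->
    equalizer op p (fun i : 'I_2 => if val i == 0 then z else y ord_max).
  move=> y_eq y_z; apply/equalizer_pairP; rewrite /p /= /c -opA -y_z.
  exact: y_eq.
have [z0 y0_z0] := x_gen _ (equalizer_lift_max y0_eq).
have [uv [uv_eq uv_gen]] := pair_mge (ex_intro _ _ (p_eq _ _ y0_eq y0_z0)).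
pose x' i := if unlift ord_max i is Some j then op (x j) (uv ord0) else uv ord_max.
have x'_lift j : x' (lift ord_max j) = op (x j) (uv ord0) by rewrite /x' liftK.
have x'_max : x' ord_max = uv ord_max by rewrite /x' unlift_none.
exists x'; split.
  apply: (equalizer_common_value (c := op c (uv ord0))) => i.
  case: (unliftP ord_max i) => [j|] ->; first by rewrite x'_lift opA mx_c.
  by rewrite x'_max; have := uv_eq ord_max ord0.
move=> y y_eq; have [z y_z] := x_gen _ (equalizer_lift_max y_eq).
have [w zy_w] := uv_gen _ (p_eq _ _ y_eq y_z).
exists w => i; case: (unliftP ord_max i) => [j|] ->.
  by rewrite x'_lift -opA -(zy_w ord0); apply: y_z.
by rewrite x'_max -(zy_w ord_max).
Qed.

Lemma mge_of_equalizable n (m : 'I_n.+1 -> M) :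
  equalizable op m -> exists x, mge op m x.
Proof.
elim: n m => [m _|n IHn m [y y_eq]]; first by exists (fun _ => e); exact: mge_singleton.
have [x x_mge] := IHn _ (ex_intro _ _ (equalizer_lift_max y_eq)).
by apply: mge_extend x_mge _; exists y.
Qed.

End MgeTuples.

Theorem lemma5 (M : Type) (op : M -> M -> M) (e : M) :
  mge_monoid op e ->
  forall (n : nat), 1 <= n ->
  forall m : 'I_n -> M, equalizable op m ->
  exists x : 'I_n -> M, mge op m x.
Proof.
move=> [[opA [op1 _]] [_ pair_mge]] [//|n] _.
exact: mge_of_equalizable.
Qed.
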